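(* Let $d\geq 0$ and $0<i\leq d+1$ be integers such that $i$ divides $d+1$. Let $\Delta\in\mathcal{C}(i,d)$ with $f_j(\Delta)=f_j(S(i,d))$ for every $j$. Then $\Delta$ is isomorphic to $S(i,d)$.
   Context: All simplicial complexes are finite abstract simplicial complexes; $f_j(\Delta)$ denotes the number of $j$-dimensional faces of $\Delta$. A set $F$ of vertices is a missing face of $\Delta$ if $F\notin\Delta$ but every proper subset of $F$ is in $\Delta$; its dimension is $|F|-1$. $\mathcal{C}(i,d)$ denotes the family of $d$-dimensional simplicial complexes $\Delta$ with $\tilde H_d(\Delta;\mathbb{Z})\neq 0$ (reduced homology) and with no missing faces of dimension $>i$. For integers $d\geq 0$, $i>0$ with $d+1=qi+r$ ($q\geq 0$, $1\leq r\leq i$), $S(i,d)$ is the simplicial join of $q$ copies of $\partial\sigma^i$ and one copy of $\partial\sigma^r$ on pairwise disjoint vertex sets, where $\partial\sigma^k$ is the boundary complex of the $k$-simplex. *)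

From HB Require Import structures.
From mathcomp Require Import all_boot all_order all_algebra.
Set Implicit Arguments. Unset Strict Implicit. Unset Printing Implicit Defensive.
Import Order.TTheory GRing.Theory Num.Theory.

Definition simplicial_complex (V : finType) (D : {set {set V}}) : Prop :=
  set0 \in D /\ forall F G : {set V}, F \in D -> G \subset F -> G \in D.

Definition has_dim (V : finType) (D : {set {set V}}) (d : nat) : Prop :=
  (exists2 F, F \in D & #|F| = d.+1) /\ forall F, F \in D -> #|F| <= d.+1.

Definition fvec (V : finType) (D : {set {set V}}) (j : nat) : nat :=
  #|[set F in D | #|F| == j.+1]|.

(* Oriented simplicial boundary with integer coefficients, the vertices
   being ordered by enum_rank; the empty face is the unique (-1)-face,
   so this is the augmented (reduced) chain complex.
   (bd c) G = sum over faces F and x in F with F \ {x} = G of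
   (-1)^(position of x in F) * c F. *)
Definition vpos (V : finType) (F : {set V}) (x : V) : nat :=
  #|[set y in F | enum_rank y < enum_rank x]|.

Definition bd (V : finType) (c : {set V} -> int) (G : {set V}) : int :=
  (\sum_(F : {set V}) \sum_(x in F | F :\ x == G)
      (-1) ^+ vpos F x * c F)%R.

Definition dchain (V : finType) (D : {set {set V}}) (d : nat)
  (c : {set V} -> int) : Prop :=
  forall F, c F != 0%R -> (F \in D) && (#|F| == d.+1).

(* \tilde H_d(D; Z) <> 0, for D of dimension d: since there are no
   (d+1)-faces, \tilde H_d = ker(boundary on d-chains). *)
Definition top_homology_nonzero (V : finType) (D : {set {set V}}) (d : nat)
  : Prop :=
  exists c : {set V} -> int,
    [/\ dchain D d c, exists F, c F != 0%R & forall G, bd c G = 0%R].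

Definition missing_face (V : finType) (D : {set {set V}}) (F : {set V}) : Prop :=
  F \notin D /\ forall G : {set V}, G \proper F -> G \in D.

Definition inC (i d : nat) (V : finType) (D : {set {set V}}) : Prop :=
  [/\ simplicial_complex D, has_dim D d, top_homology_nonzero D d
    & forall F, missing_face D F -> #|F| - 1 <= i].

(* S(i,d): with d+1 = q i + r, 1 <= r <= i, i.e. q = d %/ i, r = d %% i + 1.
   Vertex set 'I_(q(i+1) + r+1), partitioned into blocks
   B_b = {v | v %/ (i+1) = b}, b = 0..q; blocks 0..q-1 have i+1 vertices
   (copies of the vertices of sigma^i), block q has r+1 vertices.
   A face of the join of the boundaries is a set containing no full block. *)
Definition S_q (i d : nat) : nat := d %/ i.
Definition S_r (i d : nat) : nat := (d %% i).+1.
Definition S_n (i d : nat) : nat := S_q i d * i.+1 + (S_r i d).+1.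

Definition S_block (i d : nat) (b : nat) : {set 'I_(S_n i d)} :=
  [set v : 'I_(S_n i d) | val v %/ i.+1 == b].

Definition S_complex (i d : nat) : {set {set 'I_(S_n i d)}} :=
  [set F : {set 'I_(S_n i d)} |
     [forall b : 'I_(S_q i d).+1, ~~ (S_block i d b \subset F)]].

Definition sc_isomorphic (V W : finType) (D : {set {set V}}) (E : {set {set W}})
  : Prop :=
  exists f : V -> W,
    {in \bigcup_(F in D) (F : {set V}) &, injective f} /\
    [set f @: (F : {set V}) | F in D] = E.

From mathcomp Require Import all_boot all_order all_algebra.
From mathcomp Require Import zify.
Set Implicit Arguments. Unset Strict Implicit. Unset Printing Implicit Defensive.

(* When i divides d+1, S(i,d) is the join of k = (d+1)/i copies of the
   boundary of the i-simplex: its k(i+1) vertices split into k blocks of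
   size i+1, and its faces are the vertex sets containing no block.
   Equality of f-vectors forces D to have k(i+1) vertices, to contain every
   set of at most i vertices, and to have exactly k non-faces with i+1
   vertices.  As missing faces have at most i+1 vertices, a vertex set is a
   face of D iff it contains none of these k non-faces.  Two of them cannot
   meet: deleting their common vertex and one vertex of every other
   non-face would leave a face with more than ki = d+1 vertices.  So the k
   non-faces partition the vertices of D just as the blocks partition
   those of S(i,d), and any bijection matching the two partitions is an
   isomorphism. *)

Definition vertices (V : finType) (D : {set {set V}}) : {set V} :=
  \bigcup_(F in D) F.

Definition nonfaces (V : finType) (W : {set V}) (D : {set {set V}}) (m : nat)
  : {set {set V}} :=
  [set M : {set V} | [&& M \subset W, #|M| == m & M \notin D]].

Lemma sub_vertices (V : finType) (D : {set {set V}}) F :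
  F \in D -> F \subset vertices D.
Proof. exact: bigcup_sup. Qed.

Lemma subset_imset_in (aT rT : finType) (f : aT -> rT) (W A B : {set aT}) :
  {in W &, injective f} -> A \subset W -> B \subset W ->
  (f @: A \subset f @: B) = (A \subset B).
Proof.
move=> finj sAW sBW; apply/idP/idP => [/subsetP sfAB|]; last exact: imsetS.
apply/subsetP => x xA; have /imsetP[y yB fxy] := sfAB _ (imset_f f xA).
by rewrite (finj _ _ (subsetP sAW _ xA) (subsetP sBW _ yB) fxy).
Qed.

Lemma sc_isomorphic_blocks (V T : finType) (D : {set {set V}}) (E : {set {set T}})
    (P : {set {set V}}) (Q : {set {set T}}) (f : V -> T) :
  (forall F : {set V},
     (F \in D) = (F \subset vertices D) && [forall M in P, ~~ (M \subset F)]) ->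
  (forall G : {set T}, (G \in E) = [forall B in Q, ~~ (B \subset G)]) ->
  (forall M : {set V}, M \in P -> M \subset vertices D) ->
  {in vertices D &, injective f} -> f @: vertices D = [set: T] ->
  [set f @: M | M : {set V} in P] = Q ->
  sc_isomorphic D E.
Proof.
move=> memD memE sPW finj fW fP; exists f; split=> //.
apply/setP => G; apply/imsetP/idP => [[F FD ->] | GE].
  have sFW : F \subset vertices D by exact: sub_vertices.
  rewrite memE -fP; apply/forall_inP => _ /imsetP[M MP ->].
  rewrite (subset_imset_in finj (sPW M MP) sFW).
  by move: FD; rewrite memD => /andP[_ /forall_inP]; apply.
exists (vertices D :&: f @^-1: G).
  rewrite memD subsetIl; apply/forall_inP => M MP; apply: contraTN GE => sMF.
  rewrite memE negb_forall; apply/existsP; exists (f @: M).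
  rewrite -fP imset_f //= negbK; apply/subsetP => _ /imsetP[x xM ->].
  by have := subsetP sMF x xM; rewrite !inE => /andP[].
apply/setP => y; apply/idP/imsetP => [Gy | [x] /setIP[_]]; last by rewrite inE => ? ->.
have /imsetP[x xW eq_y] : y \in f @: vertices D by rewrite fW inE.
by exists x; rewrite // inE xW inE -eq_y.
Qed.

Section FaceNumbers.
Variables (V : finType) (D : {set {set V}}).

Lemma fvec_add_nonfaces (W : {set V}) m :
  (forall F, F \in D -> F \subset W) ->
  fvec D m + #|nonfaces W D m.+1| = 'C(#|W|, m.+1).
Proof.
move=> sDW; rewrite -cards_draws.
rewrite -(cardsID D [set A : {set V} | A \subset W & #|A| == m.+1]).
congr (_ + _); apply: eq_card => F; rewrite !inE.
  by case FD: (F \in D); rewrite ?andbF //= andbT (sDW _ FD).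
by rewrite [RHS]andbC andbA.
Qed.

Lemma mem_full_skeleton (W : {set V}) m (F : {set V}) :
  (forall F, F \in D -> F \subset W) -> fvec D m = 'C(#|W|, m.+1) ->
  F \subset W -> #|F| = m.+1 -> F \in D.
Proof.
move=> sDW Dfull sFW cardF; apply: contraT => FnD.
have : #|nonfaces W D m.+1| == 0.
  by rewrite -(eqn_add2l (fvec D m)) addn0 fvec_add_nonfaces // Dfull.
by rewrite cards_eq0 => /eqP/setP/(_ F); rewrite !inE sFW cardF eqxx FnD.
Qed.

Hypothesis Dsc : simplicial_complex D.

Lemma fvec0_vertices : fvec D 0 = #|vertices D|.
Proof.
rewrite -[RHS]bin1 -(fvec_add_nonfaces 0 (@sub_vertices _ D)).
suff -> : nonfaces (vertices D) D 1 = set0 by rewrite cards0 addn0.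
apply/setP => M; rewrite !inE; apply/negP => /and3P[sMW /cards1P[x eqM] xnD].
subst M; have /bigcupP[G GD xG] : x \in vertices D by rewrite -sub1set.
by move: xnD; rewrite (Dsc.2 _ _ GD) // sub1set.
Qed.

Lemma skeleton_of_fvec i :
  (forall j, j < i -> fvec D j = 'C(#|vertices D|, j.+1)) ->
  forall F : {set V}, F \subset vertices D -> #|F| <= i -> F \in D.
Proof.
move=> Dfull F sFW; case cardF: #|F| => [|m] lemi.
  by move/eqP: cardF; rewrite cards_eq0 => /eqP->; exact: Dsc.1.
exact: (mem_full_skeleton (@sub_vertices _ D) (Dfull m lemi)).
Qed.

End FaceNumbers.

Section MinimalNonfaces.
Variables (V : finType) (D : {set {set V}}) (i k : nat).
Hypothesis Dsc : simplicial_complex D.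
Hypothesis Dmissing : forall F, missing_face D F -> #|F| - 1 <= i.
Hypothesis Dskeleton :
  forall F : {set V}, F \subset vertices D -> #|F| <= i -> F \in D.

Local Notation W := (vertices D).
Local Notation N := (nonfaces W D i.+1).

Lemma card_nonface M : M \in N -> #|M| = i.+1.
Proof. by rewrite inE => /and3P[_ /eqP]. Qed.

Lemma nonface_sub M : M \in N -> M \subset W.
Proof. by rewrite inE => /and3P[]. Qed.

(* A minimal non-face inside F is a missing face, so it has i+1 vertices. *)
Lemma mem_D_nonfaces (F : {set V}) :
  (F \in D) = (F \subset W) && [forall M in N, ~~ (M \subset F)].
Proof.
apply/idP/andP => [FD | [sFW /forall_inP noN]].
  split; first exact: sub_vertices.
  apply/forall_inP => M; rewrite inE => /and3P[_ _]; apply: contra.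
  exact: Dsc.2.
apply: contraT => FnD.
have [G /minsetP[/= GnD Gmin] sGF] := @minset_exists _ [pred B | B \notin D] F FnD.
have Gmiss : missing_face D G.
  split=> // H ltHG; apply: contraT => HnD.
  by move: (ltHG); rewrite (Gmin _ HnD (proper_sub ltHG)) properxx.
have sGW := subset_trans sGF sFW.
have GN : G \in N.
  rewrite inE sGW GnD andbT; have := Dmissing Gmiss.
  case: (leqP #|G| i) => [/(Dskeleton sGW) GD | ltiG]; first by rewrite GD in GnD.
  by move=> ?; apply/eqP; lia.
by have := noN G GN; rewrite sGF.
Qed.

Hypothesis Ddim : forall F, F \in D -> #|F| <= k * i.
Hypothesis Dvert : #|W| = k * i.+1.
Hypothesis Dnon : #|N| = k.

(* If M1 and M2 shared a vertex v, then v together with one vertex of each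
   of the k - 2 other non-faces would meet every non-face, and its
   complement in W would be a face with more than k * i vertices. *)
Lemma nonfaces_trivIset : trivIset N.
Proof.
apply/trivIsetP => M1 M2 M1N M2N neqM; rewrite -setI_eq0.
apply: contraT => /set0Pn[v]; rewrite inE => /andP[vM1 vM2].
pose rep (M : {set V}) := odflt v [pick x in M].
have rep_mem M : M \in N -> rep M \in M.
  move=> MN; rewrite /rep; case: pickP => [x //|M0] /=.
  by have := card_nonface MN; rewrite (eq_card0 M0).
pose H := v |: [set rep M | M in N :\ M1 :\ M2].
have cardH : #|H| < k.
  rewrite cardsU1 -Dnon (cardsD1 M1 N) M1N (cardsD1 M2 (N :\ M1)).
  rewrite in_setD1 eq_sym neqM M2N.
  apply: leq_ltn_trans (leq_add (leq_b1 _) (leq_imset_card rep _)) _.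
  by rewrite /= add1n.
have : W :\: H \in D.
  rewrite mem_D_nonfaces subsetDl; apply/forall_inP => M MN.
  apply/negP => /subsetP sMWH.
  have [MR | MnR] := boolP (M \in N :\ M1 :\ M2).
    by have := sMWH _ (rep_mem M MN); rewrite in_setD in_setU1 (imset_f rep MR) orbT.
  move: MnR; rewrite !in_setD1 MN andbT negb_and !negbK => /orP[]/eqP eqM.
    by have := sMWH v; rewrite eqM in_setD setU11 => /(_ vM2).
  by have := sMWH v; rewrite eqM in_setD setU11 => /(_ vM1).
move/Ddim; rewrite cardsD Dvert.
by have := subset_leq_card (subsetIr W H); lia.
Qed.

Lemma nonfaces_partition : partition N W.
Proof.
have sNW : cover N \subset W by apply/bigcupsP => M /nonface_sub.
have card_cover : #|cover N| = k * i.+1.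
  move/eqP: nonfaces_trivIset <-.
  by rewrite (eq_bigr (fun _ => i.+1)) ?sum_nat_const ?Dnon // => M /card_nonface.
rewrite /partition nonfaces_trivIset eqEcard sNW Dvert card_cover leqnn /=.
by apply/negP => /card_nonface; rewrite cards0.
Qed.

End MinimalNonfaces.

Section JoinOfBoundaries.
Variables i d : nat.
Hypotheses (i_gt0 : 0 < i) (i_dvd : i %| d.+1).

Local Notation k := (S_q i d).+1.
Local Notation n := (S_n i d).

Lemma S_r_dvd : S_r i d = i.
Proof.
have le_ri : S_r i d <= i by exact: ltn_pmod.
have : i %| S_r i d.
  by rewrite -(dvdn_addr _ (dvdn_mull (S_q i d) (dvdnn i))) /S_r /S_q addnS -divn_eq.
by move/(dvdn_leq (ltn0Sn _)) => le_ir; apply/eqP; rewrite eqn_leq le_ri.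
Qed.

Lemma S_n_dvd : n = k * i.+1.
Proof. by rewrite /S_n S_r_dvd mulSn addnC. Qed.

Lemma S_dim_dvd : d.+1 = k * i.
Proof. by have := divn_eq d i; have := S_r_dvd; rewrite /S_r /S_q; lia. Qed.

Lemma S_n_gt0 : 0 < n.
Proof. by rewrite /S_n addnS. Qed.

Definition S_vertex (b j : nat) : 'I_n :=
  insubd (Ordinal S_n_gt0) (b * i.+1 + j).

Lemma S_vertexE b j : b < k -> j < i.+1 -> val (S_vertex b j) = b * i.+1 + j.
Proof. by move=> lt_bk lt_ji; rewrite val_insubd ifT // S_n_dvd; nia. Qed.

Lemma S_vertex_div b j : b < k -> j < i.+1 -> val (S_vertex b j) %/ i.+1 = b.
Proof. by move=> lt_bk lt_ji; rewrite S_vertexE // divnMDl // divn_small ?addn0. Qed.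

Lemma S_vertex_inj b b' j j' : b < k -> b' < k -> j < i.+1 -> j' < i.+1 ->
  S_vertex b j = S_vertex b' j' -> b = b' /\ j = j'.
Proof.
move=> lt_bk lt_b'k lt_ji lt_j'i eq_v.
have eq_b : b = b' by rewrite -(S_vertex_div lt_bk lt_ji) eq_v S_vertex_div.
by split=> //; move/(congr1 val): eq_v; rewrite !S_vertexE // eq_b => /addnI.
Qed.

Lemma S_block_vertices b :
  b < k -> S_block i d b = [set S_vertex b j | j : 'I_i.+1].
Proof.
move=> lt_bk; apply/setP => v; rewrite inE; apply/eqP/imsetP => [vb | [j _ ->]].
  exists (Ordinal (ltn_pmod v (ltn0Sn i))) => //; apply: val_inj.
  by rewrite /= S_vertexE ?ltn_pmod // -vb -divn_eq.
exact: S_vertex_div.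
Qed.

Lemma card_S_block b : b < k -> #|S_block i d b| = i.+1.
Proof.
move=> lt_bk; rewrite S_block_vertices // card_in_imset ?card_ord // => j j' _ _.
by case/(S_vertex_inj lt_bk lt_bk (ltn_ord j) (ltn_ord j')) => _ /val_inj.
Qed.

Lemma mem_S_complex (G : {set 'I_n}) :
  (G \in S_complex i d) = [forall B in [set S_block i d b | b : 'I_k], ~~ (B \subset G)].
Proof.
rewrite inE; apply/forallP/forall_inP => [noB _ /imsetP[b _ ->] | noB b] //.
by apply: noB; apply: imset_f.
Qed.

Lemma S_nonfaces :
  nonfaces [set: 'I_n] (S_complex i d) i.+1 = [set S_block i d b | b : 'I_k].
Proof.
apply/setP => F; rewrite in_set subsetT mem_S_complex negb_forall; apply/idP/imsetP.
  case/and3P=> _ /eqP cardF /existsP[B].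
  rewrite negb_imply negbK => /andP[/imsetP[b _ ->] sBF].
  by exists b => //; apply/eqP; rewrite eq_sym eqEcard sBF cardF card_S_block ?ltnSn.
case=> b _ ->; rewrite card_S_block // eqxx /=; apply/existsP; exists (S_block i d b).
by rewrite imset_f ?subxx.
Qed.

Lemma fvec_S_lt j : j < i -> fvec (S_complex i d) j = 'C(n, j.+1).
Proof.
move=> lt_ji; rewrite -[in RHS](card_ord n) -cardsT.
rewrite -(@fvec_add_nonfaces _ (S_complex i d) _ j) ?subsetT //.
suff -> : nonfaces [set: 'I_n] (S_complex i d) j.+1 = set0 by rewrite cards0 addn0.
apply/setP => F; rewrite in_set in_set0 mem_S_complex.
apply/negP => /and3P[_ /eqP cardF /negP]; apply; apply/forall_inP => _ /imsetP[b _ ->].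
by apply/negP => /subset_leq_card; rewrite card_S_block // cardF; lia.
Qed.

Lemma fvec_S_i : fvec (S_complex i d) i + k = 'C(n, i.+1).
Proof.
rewrite -[in RHS](card_ord n) -cardsT.
rewrite -(@fvec_add_nonfaces _ (S_complex i d) _ i) ?subsetT // S_nonfaces.
rewrite card_in_imset ?card_ord // => b b' _ _ eq_B; apply: val_inj.
have : S_vertex b 0 \in S_block i d b' by rewrite -eq_B inE S_vertex_div.
by rewrite inE S_vertex_div // => /eqP.
Qed.

Variables (V : finType) (W : {set V}) (P : {set {set V}}).
Hypotheses (P_part : partition P W) (card_P : #|P| = k).
Hypothesis card_part : forall M, M \in P -> #|M| = i.+1.

Definition block_rank (M : {set V}) : nat := index M (enum P).

Definition block_vertex (v : V) : 'I_n :=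
  S_vertex (block_rank (pblock P v)) (index v (enum (pblock P v))).

Lemma block_rank_lt M : M \in P -> block_rank M < k.
Proof. by move=> MP; rewrite /block_rank -card_P cardE index_mem mem_enum. Qed.

Lemma index_block_lt M v : M \in P -> v \in M -> index v (enum M) < i.+1.
Proof. by move=> MP vM; rewrite -(card_part MP) cardE index_mem mem_enum. Qed.

Lemma block_vertexE M v : M \in P -> v \in M ->
  block_vertex v = S_vertex (block_rank M) (index v (enum M)).
Proof.
case/and3P: P_part => _ trivP _ MP vM.
by rewrite /block_vertex (def_pblock trivP MP vM).
Qed.

Lemma pblock_cover v : v \in W -> pblock P v \in P /\ v \in pblock P v.
Proof.
case/and3P: P_part => /eqP coverP _ _.
by rewrite -coverP mem_pblock => vP; split=> //; exact: pblock_mem.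
Qed.

Lemma block_vertex_inj : {in W &, injective block_vertex}.
Proof.
move=> u v /pblock_cover[MuP uMu] /pblock_cover[MvP vMv].
rewrite (block_vertexE MuP uMu) (block_vertexE MvP vMv).
case/S_vertex_inj; rewrite ?block_rank_lt ?index_block_lt // => eq_rank.
have eq_M : pblock P u = pblock P v.
  by apply: (index_inj set0 _ _ eq_rank); rewrite mem_enum.
rewrite eq_M in uMu * => eq_index.
by apply: (index_inj u _ _ eq_index); rewrite mem_enum.
Qed.

Lemma sub_part M : M \in P -> M \subset W.
Proof. by case/and3P: P_part => /eqP <- _ _ MP; apply: bigcup_sup. Qed.

Lemma block_vertex_block M :
  M \in P -> block_vertex @: M = S_block i d (block_rank M).
Proof.
move=> MP; apply/eqP; rewrite eqEcard.
rewrite card_S_block ?block_rank_lt // card_in_imset ?card_part //; last first.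
  by move=> x y xM yM; apply: block_vertex_inj; apply: (subsetP (sub_part MP)).
rewrite leqnn andbT; apply/subsetP => _ /imsetP[v vM ->].
by rewrite inE (block_vertexE MP vM) S_vertex_div ?block_rank_lt ?index_block_lt.
Qed.

Lemma block_vertex_onto : block_vertex @: W = [set: 'I_n].
Proof.
apply/eqP; rewrite eqEcard subsetT cardsT card_ord.
rewrite card_in_imset; last exact: block_vertex_inj.
by rewrite (card_uniform_partition card_part P_part) card_P S_n_dvd leqnn.
Qed.

Lemma block_vertex_blocks :
  [set block_vertex @: M | M : {set V} in P] = [set S_block i d b | b : 'I_k].
Proof.
apply/setP => B; apply/imsetP/imsetP => [[M MP ->] | [b _ ->]].
  by exists (Ordinal (block_rank_lt MP)); rewrite ?block_vertex_block.
have lt_b : b < size (enum P) by rewrite -cardE card_P.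
have bP : nth set0 (enum P) b \in P by rewrite -mem_enum mem_nth.
exists (nth set0 (enum P) b) => //.
by rewrite block_vertex_block // /block_rank index_uniq ?enum_uniq.
Qed.

End JoinOfBoundaries.

Theorem theorem1p1 (V : finType) (D : {set {set V}}) (d i : nat) :
  0 < i -> i <= d.+1 -> i %| d.+1 ->
  inC i d D ->
  (forall j : nat, fvec D j = fvec (S_complex i d) j) ->
  sc_isomorphic D (S_complex i d).
Proof.
move=> i_gt0 _ i_dvd [Dsc [_ Ddim] _ Dmissing] Df.
have Dvert : #|vertices D| = S_n i d by rewrite -fvec0_vertices // Df fvec_S_lt // bin1.
have Dskeleton : forall F : {set V}, F \subset vertices D -> #|F| <= i -> F \in D.
  by apply: skeleton_of_fvec => // j lt_ji; rewrite Df fvec_S_lt // Dvert.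
have Dnon : #|nonfaces (vertices D) D i.+1| = (S_q i d).+1.
  apply: (@addnI (fvec D i)); rewrite fvec_add_nonfaces; last exact: sub_vertices.
  by rewrite Df fvec_S_i // Dvert.
have Dpart : partition (nonfaces (vertices D) D i.+1) (vertices D).
  apply: nonfaces_partition Dnon => //.
    by move=> F /Ddim; rewrite (S_dim_dvd i_gt0 i_dvd).
  by rewrite Dvert (S_n_dvd i_gt0 i_dvd).
have card_N := @card_nonface _ D i.
apply: (sc_isomorphic_blocks (mem_D_nonfaces Dsc Dmissing Dskeleton)
                             (@mem_S_complex i d)).
- exact: nonface_sub.
- exact: (block_vertex_inj i_gt0 i_dvd Dpart Dnon card_N).
- exact: (block_vertex_onto i_gt0 i_dvd Dpart Dnon card_N).
- exact: (block_vertex_blocks i_gt0 i_dvd Dpart Dnon card_N).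
Qed.
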